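(* Let $Y$ be a real Banach space. Then $L(\ell_1,Y)$ has octahedral norm if and only if $Y$ has octahedral norm.
   Context: The norm of a Banach space $Z$ is octahedral if for every finite-dimensional subspace $E$ and $\varepsilon>0$ there is $y\in S_Z$ with $\|x+\lambda y\|\ge(1-\varepsilon)(\|x\|+|\lambda|)$ for all $x\in E$, scalars $\lambda$. $L(\ell_1,Y)$ is the space of bounded linear operators from $\ell_1$ to $Y$ with the operator norm. *)

From Stdlib Require Import Reals Lra List Classical ClassicalEpsilon.
Open Scope R_scope.

Record IsNormedSpace {V : Type} (zero : V) (add : V -> V -> V)
    (scal : R -> V -> V) (norm : V -> R) : Prop := {
  ns_add_assoc : forall x y z, add x (add y z) = add (add x y) z;
  ns_add_comm : forall x y, add x y = add y x;
  ns_add_zero : forall x, add zero x = x;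
  ns_add_opp : forall x, add x (scal (-1) x) = zero;
  ns_scal_one : forall x, scal 1 x = x;
  ns_scal_assoc : forall a b x, scal a (scal b x) = scal (a * b) x;
  ns_scal_distr_r : forall a b x, scal (a + b) x = add (scal a x) (scal b x);
  ns_scal_distr_l : forall a x y, scal a (add x y) = add (scal a x) (scal a y);
  ns_norm_eq0 : forall x, norm x = 0 -> x = zero;
  ns_norm_scal : forall a x, norm (scal a x) = Rabs a * norm x;
  ns_norm_triangle : forall x y, norm (add x y) <= norm x + norm y
}.

Record IsBanach {V : Type} (zero : V) (add : V -> V -> V)
    (scal : R -> V -> V) (norm : V -> R) : Prop := {
  bs_normed : IsNormedSpace zero add scal norm;
  bs_complete : forall u : nat -> V,
    (forall eps, eps > 0 -> exists N, forall m n, (m >= N)%nat -> (n >= N)%nat ->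
        norm (add (u m) (scal (-1) (u n))) < eps) ->
    exists l, forall eps, eps > 0 -> exists N, forall n, (n >= N)%nat ->
        norm (add (u n) (scal (-1) l)) < eps
}.

Inductive Span {V : Type} (zero : V) (add : V -> V -> V) (scal : R -> V -> V)
    (xs : list V) : V -> Prop :=
| span_zero : Span zero add scal xs zero
| span_step : forall c v x, In v xs -> Span zero add scal xs x ->
    Span zero add scal xs (add (scal c v) x).

(** Octahedral norm on the space {v : V | P v} (P is the carrier predicate,
    a subspace of V; use P := fun _ => True for the whole of V).
    Every finite-dimensional subspace E is the span of a finite list xs. *)
Definition Octahedral {V : Type} (P : V -> Prop) (zero : V) (add : V -> V -> V)
    (scal : R -> V -> V) (norm : V -> R) : Prop :=
  forall xs : list V, Forall P xs ->
  forall eps, eps > 0 ->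
  exists y, P y /\ norm y = 1 /\
    forall x lam, Span zero add scal xs x ->
      norm (add x (scal lam y)) >= (1 - eps) * (norm x + Rabs lam).

(** Supremum of a set of reals (0 if empty or unbounded above). *)
Definition Rsup (E : R -> Prop) : R :=
  match excluded_middle_informative (bound E /\ exists x, E x) with
  | left H => proj1_sig (completeness E (proj1 H) (proj2 H))
  | right _ => 0
  end.

Definition l1 : Type :=
  { a : nat -> R | exists s, infinite_sum (fun n => Rabs (a n)) s }.

Definition l1_norm_is (a : l1) (s : R) : Prop :=
  infinite_sum (fun n => Rabs (proj1_sig a n)) s.

Section Ops.
Context {Y : Type} (zero : Y) (add : Y -> Y -> Y) (scal : R -> Y -> Y)
  (norm : Y -> R).

Definition is_linear_op (T : l1 -> Y) : Prop :=
  forall (a b e : l1) (c d : R),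
    (forall n, proj1_sig e n = c * proj1_sig a n + d * proj1_sig b n) ->
    T e = add (scal c (T a)) (scal d (T b)).

Definition is_bounded_op (T : l1 -> Y) : Prop :=
  exists M, forall a s, l1_norm_is a s -> norm (T a) <= M * s.

Definition in_L_l1 (T : l1 -> Y) : Prop := is_linear_op T /\ is_bounded_op T.

Definition op_zero : l1 -> Y := fun _ => zero.
Definition op_add (S T : l1 -> Y) : l1 -> Y := fun a => add (S a) (T a).
Definition op_scal (c : R) (T : l1 -> Y) : l1 -> Y := fun a => scal c (T a).

Definition op_norm (T : l1 -> Y) : R :=
  Rsup (fun r => exists a s, l1_norm_is a s /\ s <= 1 /\ r = norm (T a)).
End Ops.

From Stdlib Require Import Reals Lra Lia Psatz List Classical ClassicalEpsilon FunctionalExtensionality.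
Open Scope R_scope.

(* The norm of an operator T on l1 is sup_n |T e_n|, so octahedrality can be
   checked on the unit vectors e_n.

   If Y is octahedral and T_1, ..., T_k are operators, pick for every n a unit
   vector y_n of Y that is eps-octahedral for span {T_i e_n}.  The operator
   S a = sum_n a_n y_n has norm one and, for X in span {T_i},
   |X + lam S| >= sup_n |X e_n + lam y_n| >= (1 - eps) (|X| + |lam|).

   Conversely, embed Y isometrically into L(l1, Y) by x |-> (a |-> a_0 x).  If S
   is octahedral for the images of a unit vector x_1 and of x_1', ..., x_k', then
   |x + lam S e_0| dominates the norm of the image of x plus lam S, unless
   |lam| does; testing with x = x_1, lam = 1 shows |S e_0| is close to one, and
   S e_0 / |S e_0| is then octahedral for the x_i'. *)

Lemma Rsup_upper_bound (E : R -> Prop) r : bound E -> E r -> r <= Rsup E.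
Proof.
  intros Hb Hr; unfold Rsup.
  destruct (excluded_middle_informative _) as [H|H].
  - destruct (completeness E _ _) as [m [Hm1 Hm2]]; simpl; auto.
  - exfalso; apply H; eauto.
Qed.

Lemma Rsup_least_upper_bound (E : R -> Prop) B :
  (exists x, E x) -> (forall r, E r -> r <= B) -> Rsup E <= B.
Proof.
  intros He Hb; unfold Rsup.
  destruct (excluded_middle_informative _) as [H|H].
  - destruct (completeness E _ _) as [m [Hm1 Hm2]]; simpl; auto.
  - exfalso; apply H; split; [exists B|]; auto.
Qed.

Lemma Rabs_m1 : Rabs (-1) = 1.
Proof. rewrite Rabs_left; lra. Qed.

Lemma infinite_sum_ext f g s :
  (forall n, f n = g n) -> infinite_sum f s -> infinite_sum g s.
Proof. intros Hfg; replace g with f; auto; now apply functional_extensionality. Qed.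

Lemma infinite_sum_finite_support f N :
  (forall n, (N < n)%nat -> f n = 0) -> infinite_sum f (sum_f_R0 f N).
Proof.
  intros Hf.
  assert (Hstat : forall M, (M >= N)%nat -> sum_f_R0 f M = sum_f_R0 f N).
  { induction M as [|M IH]; intros HM.
    - now replace N with 0%nat by lia.
    - destruct (Nat.eq_dec (S M) N) as [<-|HMN]; auto.
      simpl; rewrite IH, Hf by lia; ring. }
  intros eps He; exists N; intros n Hn.
  unfold R_dist; rewrite Hstat, Rminus_diag, Rabs_R0 by lia; lra.
Qed.

Lemma partial_sum_le_infinite_sum f s N :
  (forall n, 0 <= f n) -> infinite_sum f s -> sum_f_R0 f N <= s.
Proof.
  intros Hf Hs; apply (growing_ineq (sum_f_R0 f)); auto.
  intro n; simpl; specialize (Hf (S n)); lra.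
Qed.

Lemma term_le_partial_sum f n : (forall k, 0 <= f k) -> f n <= sum_f_R0 f n.
Proof.
  intros Hf; destruct n; simpl; [lra|].
  pose proof (cond_pos_sum f n Hf); lra.
Qed.

(** * The sequence space l1 *)

Definition l1_of (f : nat -> R) (s : R)
  (Hs : infinite_sum (fun n => Rabs (f n)) s) : l1 :=
  exist _ f (ex_intro _ s Hs).

Lemma l1_norm_nonneg a s : l1_norm_is a s -> 0 <= s.
Proof.
  intros Ha; eapply Rle_trans; [|apply (partial_sum_le_infinite_sum _ _ 0 (fun n => Rabs_pos _) Ha)].
  apply Rabs_pos.
Qed.

Lemma l1_coord_le a s n : l1_norm_is a s -> Rabs (proj1_sig a n) <= s.
Proof.
  intros Ha; eapply Rle_trans.
  - apply (term_le_partial_sum (fun n => Rabs (proj1_sig a n))); intro; apply Rabs_pos.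
  - apply partial_sum_le_infinite_sum; auto; intro; apply Rabs_pos.
Qed.

Definition unit_seq (k : nat) : nat -> R := fun n => if Nat.eqb n k then 1 else 0.

Lemma unit_seq_summable k : infinite_sum (fun n => Rabs (unit_seq k n)) 1.
Proof.
  assert (Hsum : sum_f_R0 (fun n => Rabs (unit_seq k n)) k = 1).
  { destruct k as [|k]; simpl; unfold unit_seq; rewrite Nat.eqb_refl, Rabs_R1; auto.
    rewrite sum_eq_R0; [ring|]. intros n Hn.
    destruct (Nat.eqb_spec n (S k)); [lia|apply Rabs_R0]. }
  rewrite <- Hsum; apply infinite_sum_finite_support.
  intros n Hn; unfold unit_seq; destruct (Nat.eqb_spec n k); [lia|apply Rabs_R0].
Qed.

Definition l1_unit (k : nat) : l1 := l1_of (unit_seq k) 1 (unit_seq_summable k).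

Lemma l1_unit_norm k : l1_norm_is (l1_unit k) 1.
Proof. apply unit_seq_summable. Qed.

Lemma zero_seq_summable : infinite_sum (fun _ : nat => Rabs 0) 0.
Proof.
  intros eps He; exists 0%nat; intros n _.
  unfold R_dist; rewrite sum_eq_R0 by (intros; apply Rabs_R0).
  rewrite Rminus_diag, Rabs_R0; lra.
Qed.

Definition l1_zero : l1 := l1_of (fun _ => 0) 0 zero_seq_summable.

Lemma l1_zero_norm : l1_norm_is l1_zero 0.
Proof. apply zero_seq_summable. Qed.

Definition trunc_seq (N : nat) (f : nat -> R) : nat -> R :=
  fun n => if Nat.leb n N then f n else 0.

Lemma trunc_seq_summable f N :
  infinite_sum (fun n => Rabs (trunc_seq N f n)) (sum_f_R0 (fun n => Rabs (f n)) N).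
Proof.
  rewrite (sum_eq _ (fun n => Rabs (trunc_seq N f n)))
    by (intros i Hi; unfold trunc_seq; now rewrite (proj2 (Nat.leb_le i N))).
  apply infinite_sum_finite_support; intros n Hn.
  unfold trunc_seq; rewrite (proj2 (Nat.leb_gt n N)) by lia; apply Rabs_R0.
Qed.

Lemma tail_seq_summable f N s : infinite_sum (fun n => Rabs (f n)) s ->
  infinite_sum (fun n => Rabs (f n - trunc_seq N f n))
    (s - sum_f_R0 (fun n => Rabs (f n)) N).
Proof.
  intros Hs; apply (infinite_sum_ext (fun n => Rabs (f n) - Rabs (trunc_seq N f n))).
  { intro n; unfold trunc_seq; destruct (Nat.leb n N);
      rewrite ?Rminus_diag, ?Rminus_0_r, ?Rabs_R0; ring. }
  intros eps He.
  destruct (CV_minus _ _ _ _ Hs (trunc_seq_summable f N) eps He) as [M HM].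
  exists M; intros n Hn; rewrite minus_sum; apply HM, Hn.
Qed.

Definition l1_trunc (N : nat) (a : l1) : l1 :=
  l1_of (trunc_seq N (proj1_sig a)) _ (trunc_seq_summable (proj1_sig a) N).

Definition l1_tail (N : nat) (a : l1) : l1.
Proof.
  refine (exist _ (fun n => proj1_sig a n - trunc_seq N (proj1_sig a) n) _).
  destruct (proj2_sig a) as [s Hs]; eexists; exact (tail_seq_summable _ N s Hs).
Defined.

Section NormedSpace.
Context {Y : Type} (zero : Y) (add : Y -> Y -> Y) (scal : R -> Y -> Y)
  (norm : Y -> R) (HN : IsNormedSpace zero add scal norm).

Lemma vadd_assoc x y z : add x (add y z) = add (add x y) z.
Proof. exact (ns_add_assoc _ _ _ _ HN x y z). Qed.
Lemma vadd_comm x y : add x y = add y x.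
Proof. exact (ns_add_comm _ _ _ _ HN x y). Qed.
Lemma vadd_0l x : add zero x = x.
Proof. exact (ns_add_zero _ _ _ _ HN x). Qed.
Lemma vadd_opp x : add x (scal (-1) x) = zero.
Proof. exact (ns_add_opp _ _ _ _ HN x). Qed.
Lemma scal_1 x : scal 1 x = x.
Proof. exact (ns_scal_one _ _ _ _ HN x). Qed.
Lemma scal_assoc a b x : scal a (scal b x) = scal (a * b) x.
Proof. exact (ns_scal_assoc _ _ _ _ HN a b x). Qed.
Lemma scal_distr_r a b x : scal (a + b) x = add (scal a x) (scal b x).
Proof. exact (ns_scal_distr_r _ _ _ _ HN a b x). Qed.
Lemma scal_distr_l a x y : scal a (add x y) = add (scal a x) (scal a y).
Proof. exact (ns_scal_distr_l _ _ _ _ HN a x y). Qed.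
Lemma norm_eq0 x : norm x = 0 -> x = zero.
Proof. exact (ns_norm_eq0 _ _ _ _ HN x). Qed.
Lemma norm_scal a x : norm (scal a x) = Rabs a * norm x.
Proof. exact (ns_norm_scal _ _ _ _ HN a x). Qed.
Lemma norm_triangle x y : norm (add x y) <= norm x + norm y.
Proof. exact (ns_norm_triangle _ _ _ _ HN x y). Qed.

Lemma vadd_0r x : add x zero = x.
Proof. rewrite vadd_comm; apply vadd_0l. Qed.

Lemma scal_0 x : scal 0 x = zero.
Proof. replace 0 with (1 + -1) by ring; rewrite scal_distr_r, scal_1; apply vadd_opp. Qed.

Lemma scal_vzero c : scal c zero = zero.
Proof. rewrite <- (scal_0 zero), scal_assoc, Rmult_0_r; reflexivity. Qed.

Lemma norm_zero : norm zero = 0.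
Proof. rewrite <- (scal_0 zero), norm_scal, Rabs_R0; ring. Qed.

Lemma norm_nonneg x : 0 <= norm x.
Proof.
  pose proof (norm_triangle x (scal (-1) x)) as H.
  rewrite vadd_opp, norm_zero, norm_scal, Rabs_m1 in H; lra.
Qed.

Lemma vadd_ACA a b c d : add (add a b) (add c d) = add (add a c) (add b d).
Proof.
  rewrite !vadd_assoc; f_equal; rewrite <- !vadd_assoc; f_equal; apply vadd_comm.
Qed.

Definition vsub (u v : Y) : Y := add u (scal (-1) v).

Lemma vsub_vv u : vsub u u = zero.
Proof. apply vadd_opp. Qed.

Lemma vaddKsub u v : add (vsub u v) v = u.
Proof. unfold vsub; rewrite <- vadd_assoc, (vadd_comm _ v), vadd_opp; apply vadd_0r. Qed.

Lemma vsubKadd u v : vsub (add u v) u = v.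
Proof. unfold vsub; rewrite (vadd_comm u), <- vadd_assoc, vadd_opp; apply vadd_0r. Qed.

Lemma norm_vsubC u v : norm (vsub u v) = norm (vsub v u).
Proof.
  replace (vsub v u) with (scal (-1) (vsub u v)).
  - rewrite norm_scal, Rabs_m1; ring.
  - unfold vsub; rewrite scal_distr_l, scal_assoc.
    replace (-1 * -1) with 1 by ring; rewrite scal_1, vadd_comm; reflexivity.
Qed.

Lemma vsub_eq0 u v : vsub u v = zero -> u = v.
Proof. intros H; rewrite <- (vaddKsub u v), H; apply vadd_0l. Qed.

Lemma norm_triangle_vsub u v w : norm (vsub u w) <= norm (vsub u v) + norm (vsub v w).
Proof.
  replace (vsub u w) with (add (vsub u v) (vsub v w)); [apply norm_triangle|].
  unfold vsub; rewrite <- vadd_assoc, (vadd_assoc (scal (-1) v)), (vadd_comm _ v),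
    vadd_opp, vadd_0l; reflexivity.
Qed.

Lemma vsub_lincomb c d u v l m :
  vsub (add (scal c u) (scal d v)) (add (scal c l) (scal d m)) =
  add (scal c (vsub u l)) (scal d (vsub v m)).
Proof.
  unfold vsub; rewrite scal_distr_l, !scal_assoc, !scal_distr_l, !scal_assoc, vadd_ACA.
  rewrite (Rmult_comm (-1) c), (Rmult_comm (-1) d); reflexivity.
Qed.

Definition vlim (u : nat -> Y) (l : Y) : Prop :=
  forall eps, eps > 0 -> exists N, forall n, (n >= N)%nat -> norm (vsub (u n) l) < eps.

Definition cauchy_complete : Prop :=
  forall u : nat -> Y,
  (forall eps, eps > 0 -> exists N, forall m n, (m >= N)%nat -> (n >= N)%nat ->
     norm (vsub (u m) (u n)) < eps) ->
  exists l, vlim u l.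

Lemma vlim_unique u l m : vlim u l -> vlim u m -> l = m.
Proof.
  intros Hl Hm; apply vsub_eq0, norm_eq0, Rle_antisym; [|apply norm_nonneg].
  apply Rle_plus_epsilon; intros eps He.
  destruct (Hl (eps / 2)) as [N1 H1]; [lra|].
  destruct (Hm (eps / 2)) as [N2 H2]; [lra|].
  specialize (H1 (max N1 N2) ltac:(lia)); specialize (H2 (max N1 N2) ltac:(lia)).
  pose proof (norm_triangle_vsub l (u (max N1 N2)) m); rewrite norm_vsubC in H1; lra.
Qed.

Lemma vlim_stationary u c k : (forall n, (n >= k)%nat -> u n = c) -> vlim u c.
Proof.
  intros Hc eps He; exists k; intros n Hn.
  rewrite Hc, vsub_vv, norm_zero by auto; lra.
Qed.

Lemma vlim_lincomb u w l m c d :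
  vlim u l -> vlim w m ->
  vlim (fun n => add (scal c (u n)) (scal d (w n))) (add (scal c l) (scal d m)).
Proof.
  intros Hu Hw eps He.
  set (K := Rabs c + Rabs d + 1).
  assert (HK : 0 < K) by (unfold K; pose proof (Rabs_pos c); pose proof (Rabs_pos d); lra).
  destruct (Hu (eps / K)) as [N1 H1]; [apply Rdiv_lt_0_compat; lra|].
  destruct (Hw (eps / K)) as [N2 H2]; [apply Rdiv_lt_0_compat; lra|].
  exists (max N1 N2); intros n Hn.
  rewrite vsub_lincomb; eapply Rle_lt_trans; [apply norm_triangle|]; rewrite !norm_scal.
  specialize (H1 n ltac:(lia)); specialize (H2 n ltac:(lia)).
  assert (Heps : Rabs c * (eps / K) + Rabs d * (eps / K) + eps / K = eps)
    by (unfold K in *; field; lra).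
  assert (0 < eps / K) by (apply Rdiv_lt_0_compat; lra).
  assert (Rabs c * norm (vsub (u n) l) <= Rabs c * (eps / K))
    by (apply Rmult_le_compat_l; [apply Rabs_pos|lra]).
  assert (Rabs d * norm (vsub (w n) m) <= Rabs d * (eps / K))
    by (apply Rmult_le_compat_l; [apply Rabs_pos|lra]).
  lra.
Qed.

Lemma norm_vlim_le u l b : (forall n, norm (u n) <= b) -> vlim u l -> norm l <= b.
Proof.
  intros Hb Hl; apply Rle_plus_epsilon; intros eps He.
  destruct (Hl eps He) as [N HN0]; specialize (HN0 N (le_n _)).
  pose proof (norm_triangle (vsub l (u N)) (u N)) as Htri.
  rewrite vaddKsub, norm_vsubC in Htri; specialize (Hb N); lra.
Qed.

(** * Bounded operators on l1 *)

Notation inL := (in_L_l1 add scal norm).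
Notation opn := (op_norm norm).

Lemma in_L_l1_zero : inL (op_zero zero).
Proof.
  split.
  - intros a b x c d _; unfold op_zero; rewrite !scal_vzero, vadd_0l; reflexivity.
  - exists 0; intros a s _; unfold op_zero; rewrite norm_zero; lra.
Qed.

Lemma in_L_l1_scal c T : inL T -> inL (op_scal scal c T).
Proof.
  intros [HT [M HM]]; split.
  - intros a b x c' d H; unfold op_scal.
    rewrite (HT a b x c' d H), scal_distr_l, !scal_assoc, (Rmult_comm c c'), (Rmult_comm c d).
    reflexivity.
  - exists (Rabs c * M); intros a s Hs; unfold op_scal; rewrite norm_scal, Rmult_assoc.
    apply Rmult_le_compat_l; [apply Rabs_pos|auto].
Qed.

Lemma in_L_l1_add S T : inL S -> inL T -> inL (op_add add S T).
Proof.
  intros [HS [MS HMS]] [HT [MT HMT]]; split.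
  - intros a b x c d H; unfold op_add.
    rewrite (HS a b x c d H), (HT a b x c d H), !scal_distr_l; apply vadd_ACA.
  - exists (MS + MT); intros a s Hs; unfold op_add.
    eapply Rle_trans; [apply norm_triangle|].
    pose proof (HMS a s Hs); pose proof (HMT a s Hs); lra.
Qed.

Lemma in_L_l1_span Ts X : Forall inL Ts ->
  Span (op_zero zero) (op_add add) (op_scal scal) Ts X -> inL X.
Proof.
  intros HTs HX; induction HX as [|c T X HT _ IH].
  - apply in_L_l1_zero.
  - rewrite Forall_forall in HTs; apply in_L_l1_add; auto; apply in_L_l1_scal; auto.
Qed.

Lemma span_apply Ts X a : Span (op_zero zero) (op_add add) (op_scal scal) Ts X ->
  Span zero add scal (map (fun T => T a) Ts) (X a).
Proof.
  intros HX; induction HX as [|c T X HT _ IH].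
  - apply span_zero.
  - unfold op_add, op_scal; apply span_step; auto; apply (in_map (fun T => T a)); auto.
Qed.

Lemma op_norm_ge T a s : inL T -> l1_norm_is a s -> s <= 1 -> norm (T a) <= opn T.
Proof.
  intros [_ [M HM]] Ha Hs1; apply Rsup_upper_bound; [|eauto].
  exists (Rabs M); intros r [b [t [Hb [Ht1 ->]]]].
  pose proof (HM b t Hb); pose proof (l1_norm_nonneg b t Hb).
  pose proof (Rle_abs M); pose proof (Rabs_pos M); nra.
Qed.

Lemma op_norm_le T B :
  (forall a s, l1_norm_is a s -> s <= 1 -> norm (T a) <= B) -> opn T <= B.
Proof.
  intros HB; apply Rsup_least_upper_bound.
  - exists (norm (T l1_zero)), l1_zero, 0; split; [apply l1_zero_norm|split; [lra|auto]].
  - intros r [a [s [Ha [Hs1 ->]]]]; eauto.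
Qed.

Lemma op_norm_nonneg T : inL T -> 0 <= opn T.
Proof.
  intros HT; eapply Rle_trans; [apply (norm_nonneg (T l1_zero))|].
  apply (op_norm_ge T l1_zero 0); auto; [apply l1_zero_norm|lra].
Qed.

Lemma op_norm_ge_unit T k : inL T -> norm (T (l1_unit k)) <= opn T.
Proof. intros HT; apply (op_norm_ge T _ 1); auto; [apply l1_unit_norm|lra]. Qed.

Lemma norm_apply_trunc_le T B a N : is_linear_op add scal T ->
  (forall k, norm (T (l1_unit k)) <= B) ->
  norm (T (l1_trunc N a)) <= B * sum_f_R0 (fun n => Rabs (proj1_sig a n)) N.
Proof.
  intros Hlin HB; induction N as [|N IH].
  - rewrite (Hlin (l1_unit 0) (l1_unit 0) (l1_trunc 0 a) (proj1_sig a 0%nat) 0).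
    + eapply Rle_trans; [apply norm_triangle|]; rewrite !norm_scal, Rabs_R0; simpl.
      pose proof (HB 0%nat); pose proof (Rabs_pos (proj1_sig a 0%nat)); nra.
    + intros [|[|n]]; simpl; unfold trunc_seq, unit_seq; simpl; lra.
  - rewrite (Hlin (l1_trunc N a) (l1_unit (S N)) (l1_trunc (S N) a) 1 (proj1_sig a (S N))).
    + eapply Rle_trans; [apply norm_triangle|]; rewrite !norm_scal, Rabs_R1; simpl.
      pose proof (HB (S N)); pose proof (Rabs_pos (proj1_sig a (S N))); nra.
    + intro n; simpl; unfold trunc_seq, unit_seq.
      destruct (Nat.leb_spec n (S N)), (Nat.leb_spec n N), (Nat.eqb_spec n (S N));
        try lia; subst; lra.
Qed.

(* The tail of [a] beyond [N] has small l1 norm, so boundedness of [T] makes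
   [T (l1_tail N a)] negligible. *)
Lemma norm_apply_le_of_unit_bound T B a s : inL T ->
  (forall k, norm (T (l1_unit k)) <= B) -> l1_norm_is a s -> norm (T a) <= B * s.
Proof.
  intros [Hlin [M HM]] HB Ha.
  set (Sn := sum_f_R0 (fun n => Rabs (proj1_sig a n))).
  apply Rle_plus_epsilon; intros eps He.
  assert (HM1 : 0 < Rabs M + 1) by (pose proof (Rabs_pos M); lra).
  destruct (Ha (eps / (Rabs M + 1))) as [N HNN]; [apply Rdiv_lt_0_compat; lra|].
  specialize (HNN N (le_n N)); fold Sn in HNN; unfold R_dist in HNN.
  assert (HSle : Sn N <= s) by (apply partial_sum_le_infinite_sum; auto; intro; apply Rabs_pos).
  rewrite Rabs_left1 in HNN by lra.
  assert (Htail : l1_norm_is (l1_tail N a) (s - Sn N)) by apply (tail_seq_summable _ N s Ha).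
  rewrite (Hlin (l1_trunc N a) (l1_tail N a) a 1 1) by (intro n; simpl; ring).
  eapply Rle_trans; [apply norm_triangle|]; rewrite !norm_scal, Rabs_R1, !Rmult_1_l.
  pose proof (HM _ _ Htail); pose proof (norm_apply_trunc_le T B a N Hlin HB) as Htr.
  fold Sn in Htr.
  assert ((Rabs M + 1) * (s - Sn N) < eps).
  { apply (Rmult_lt_compat_l (Rabs M + 1)) in HNN; auto.
    replace ((Rabs M + 1) * (eps / (Rabs M + 1))) with eps in HNN by (field; lra); lra. }
  assert (HB0 : 0 <= B) by (eapply Rle_trans; [apply norm_nonneg|apply (HB 0%nat)]).
  assert (B * Sn N <= B * s) by (apply Rmult_le_compat_l; lra).
  assert (M * (s - Sn N) <= (Rabs M + 1) * (s - Sn N))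
    by (apply Rmult_le_compat_r; [lra|pose proof (Rle_abs M); lra]).
  lra.
Qed.

Lemma op_norm_le_of_unit_bound T B : inL T ->
  (forall k, norm (T (l1_unit k)) <= B) -> opn T <= B.
Proof.
  intros HT HB; apply op_norm_le; intros a s Ha Hs1.
  eapply Rle_trans; [apply (norm_apply_le_of_unit_bound T B a s); auto|].
  pose proof (norm_nonneg (T (l1_unit 0))); pose proof (HB 0%nat).
  pose proof (l1_norm_nonneg a s Ha); nra.
Qed.

(** * The operator a |-> sum_n a_n v_n *)

Fixpoint partial_comb (v : nat -> Y) (f : nat -> R) (N : nat) : Y :=
  match N with
  | O => scal (f O) (v O)
  | S N => add (partial_comb v f N) (scal (f (S N)) (v (S N)))
  end.

Lemma partial_comb_lincomb v f g c d N :
  partial_comb v (fun n => c * f n + d * g n) N =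
  add (scal c (partial_comb v f N)) (scal d (partial_comb v g N)).
Proof.
  induction N as [|N IH]; simpl.
  - rewrite scal_distr_r, !scal_assoc; reflexivity.
  - rewrite IH, scal_distr_r, !scal_distr_l, <- !scal_assoc; apply vadd_ACA.
Qed.

Lemma partial_comb_unit v k N :
  partial_comb v (unit_seq k) N = if Nat.ltb N k then zero else v k.
Proof.
  induction N as [|N IH]; simpl.
  - unfold unit_seq; destruct k; simpl; [apply scal_1|apply scal_0].
  - rewrite IH; clear IH; unfold unit_seq; destruct (Nat.ltb_spec N k), (Nat.ltb_spec (S N) k), (Nat.eqb_spec (S N) k);
      try lia; subst; rewrite ?scal_1, ?scal_0, ?vadd_0l, ?vadd_0r; reflexivity.
Qed.

Section UnitSequence.
Variable v : nat -> Y.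
Hypothesis v_unit : forall k, norm (v k) = 1.

Lemma norm_partial_comb_le f N :
  norm (partial_comb v f N) <= sum_f_R0 (fun n => Rabs (f n)) N.
Proof.
  induction N as [|N IH]; simpl; rewrite ?norm_scal, ?v_unit; [lra|].
  eapply Rle_trans; [apply norm_triangle|]; rewrite norm_scal, v_unit; lra.
Qed.

Lemma norm_partial_comb_sub_le f m n : (n <= m)%nat ->
  norm (vsub (partial_comb v f m) (partial_comb v f n)) <=
  sum_f_R0 (fun n => Rabs (f n)) m - sum_f_R0 (fun n => Rabs (f n)) n.
Proof.
  intros Hnm; induction m as [|m IH].
  - replace n with 0%nat by lia; rewrite vsub_vv, norm_zero; lra.
  - destruct (Nat.eq_dec n (S m)) as [->|Hn]; [rewrite vsub_vv, norm_zero; lra|].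
    eapply Rle_trans; [apply (norm_triangle_vsub _ (partial_comb v f m))|].
    simpl; rewrite vsubKadd, norm_scal, v_unit; specialize (IH ltac:(lia)); lra.
Qed.

Lemma partial_comb_cauchy (a : l1) : forall eps, eps > 0 -> exists N, forall m n,
  (m >= N)%nat -> (n >= N)%nat ->
  norm (vsub (partial_comb v (proj1_sig a) m) (partial_comb v (proj1_sig a) n)) < eps.
Proof.
  destruct (proj2_sig a) as [s Hs]; intros eps He.
  destruct (Hs (eps / 2)) as [N HN0]; [lra|]; exists N; intros m n Hm Hn.
  pose proof (HN0 m Hm) as Hm'; pose proof (HN0 n Hn) as Hn'; unfold R_dist in *.
  apply Rabs_def2 in Hm'; apply Rabs_def2 in Hn'.
  destruct (Nat.le_ge_cases n m) as [Hnm|Hmn].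
  - pose proof (norm_partial_comb_sub_le (proj1_sig a) m n Hnm); lra.
  - rewrite norm_vsubC; pose proof (norm_partial_comb_sub_le (proj1_sig a) n m Hmn); lra.
Qed.

Hypothesis complete : cauchy_complete.

Definition series_op (a : l1) : Y :=
  proj1_sig (constructive_indefinite_description _ (complete _ (partial_comb_cauchy a))).

Lemma series_op_spec a : vlim (partial_comb v (proj1_sig a)) (series_op a).
Proof. unfold series_op; destruct (constructive_indefinite_description _ _); auto. Qed.

Lemma series_op_unit k : series_op (l1_unit k) = v k.
Proof.
  apply (vlim_unique (partial_comb v (unit_seq k))); [apply (series_op_spec (l1_unit k))|].
  apply (vlim_stationary _ _ k); intros n Hn; rewrite partial_comb_unit.
  destruct (Nat.ltb_spec n k); [lia|reflexivity].
Qed.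

Lemma norm_series_op_le a s : l1_norm_is a s -> norm (series_op a) <= s.
Proof.
  intros Ha; apply (norm_vlim_le (partial_comb v (proj1_sig a))); [|apply series_op_spec].
  intro n; eapply Rle_trans; [apply norm_partial_comb_le|].
  apply partial_sum_le_infinite_sum; auto; intro; apply Rabs_pos.
Qed.

Lemma series_op_in_L_l1 : inL series_op.
Proof.
  split.
  - intros a b x c d Hx.
    apply (vlim_unique (partial_comb v (proj1_sig x))); [apply series_op_spec|].
    replace (proj1_sig x) with (fun n => c * proj1_sig a n + d * proj1_sig b n)
      by (apply functional_extensionality; auto).
    erewrite (functional_extensionality (partial_comb v _))
      by (intro N; apply partial_comb_lincomb).
    apply vlim_lincomb; apply series_op_spec.
  - exists 1; intros a s Ha; rewrite Rmult_1_l; apply norm_series_op_le, Ha.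
Qed.

Lemma op_norm_series_op : opn series_op = 1.
Proof.
  apply Rle_antisym.
  - apply op_norm_le; intros a s Ha Hs1; pose proof (norm_series_op_le a s Ha); lra.
  - rewrite <- (v_unit 0), <- series_op_unit; apply op_norm_ge_unit, series_op_in_L_l1.
Qed.

End UnitSequence.

(* Dividing by [1 - eps] bounds every [norm (X e_n)], hence [opn X]; for
   [eps >= 1] the claim is trivial. *)
Lemma op_norm_lower_bound_of_units X Z lam eps : inL X -> inL Z ->
  (forall n, (1 - eps) * (norm (X (l1_unit n)) + Rabs lam) <= norm (Z (l1_unit n))) ->
  (1 - eps) * (opn X + Rabs lam) <= opn Z.
Proof.
  intros HX HZ Hunit.
  pose proof (op_norm_nonneg Z HZ); pose proof (op_norm_nonneg X HX); pose proof (Rabs_pos lam).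
  destruct (Rlt_or_le eps 1) as [Heps|Heps]; [|nra].
  set (B := opn Z / (1 - eps) - Rabs lam).
  assert (HB : opn X <= B).
  { apply op_norm_le_of_unit_bound; auto; intro n.
    apply (Rmult_le_reg_l (1 - eps)); [lra|]; unfold B.
    replace ((1 - eps) * (opn Z / (1 - eps) - Rabs lam))
      with (opn Z - (1 - eps) * Rabs lam) by (field; lra).
    specialize (Hunit n); pose proof (op_norm_ge_unit Z n HZ); lra. }
  apply (Rmult_le_compat_l (1 - eps)) in HB; [|lra]; unfold B in HB.
  replace ((1 - eps) * (opn Z / (1 - eps) - Rabs lam))
    with (opn Z - (1 - eps) * Rabs lam) in HB by (field; lra).
  lra.
Qed.

Lemma octahedral_L_l1_of_octahedral
  (complete : cauchy_complete) :
  Octahedral (fun _ : Y => True) zero add scal norm ->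
  Octahedral inL (op_zero zero) (op_add add) (op_scal scal) opn.
Proof.
  intros HO Ts HTs eps Heps.
  assert (Hy : forall n, exists y, norm y = 1 /\ forall x lam,
    Span zero add scal (map (fun T => T (l1_unit n)) Ts) x ->
    norm (add x (scal lam y)) >= (1 - eps) * (norm x + Rabs lam)).
  { intro n; destruct (HO (map (fun T => T (l1_unit n)) Ts)
      ltac:(apply Forall_forall; auto) eps Heps) as [y [_ Hy]]; eauto. }
  set (v n := proj1_sig (constructive_indefinite_description _ (Hy n))).
  assert (Hv : forall n, norm (v n) = 1 /\ forall x lam,
    Span zero add scal (map (fun T => T (l1_unit n)) Ts) x ->
    norm (add x (scal lam (v n))) >= (1 - eps) * (norm x + Rabs lam))
    by (intro n; apply (proj2_sig (constructive_indefinite_description _ (Hy n)))).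
  assert (v_unit : forall n, norm (v n) = 1) by (intro n; apply Hv).
  set (S := series_op v v_unit complete).
  assert (HS : inL S) by apply series_op_in_L_l1.
  exists S; split; [exact HS|split; [apply op_norm_series_op|]].
  intros X lam HX; apply Rle_ge.
  apply op_norm_lower_bound_of_units; [eapply in_L_l1_span; eauto| |].
  - apply in_L_l1_add; [eapply in_L_l1_span; eauto|apply in_L_l1_scal, HS].
  - intro n; unfold op_add, op_scal, S; rewrite series_op_unit.
    apply Rge_le, Hv, span_apply, HX.
Qed.

(** * Y inside L(l1, Y) *)

Definition first_coord_op (x : Y) : l1 -> Y := fun a => scal (proj1_sig a 0%nat) x.

Lemma first_coord_op_in_L_l1 x : inL (first_coord_op x).
Proof.
  split.
  - intros a b c' c d H; unfold first_coord_op; rewrite H, scal_distr_r, !scal_assoc; reflexivity.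
  - exists (norm x); intros a s Ha; unfold first_coord_op; rewrite norm_scal, Rmult_comm.
    apply Rmult_le_compat_l; [apply norm_nonneg|apply l1_coord_le, Ha].
Qed.

Lemma first_coord_op_unit0 x : first_coord_op x (l1_unit 0) = x.
Proof. apply scal_1. Qed.

Lemma span_first_coord_op xs x : Span zero add scal xs x ->
  Span (op_zero zero) (op_add add) (op_scal scal) (map first_coord_op xs) (first_coord_op x).
Proof.
  intros Hx; induction Hx as [|c y x Hy _ IH].
  - replace (first_coord_op zero) with (op_zero zero : l1 -> Y); [apply span_zero|].
    apply functional_extensionality; intro a; unfold first_coord_op, op_zero.
    rewrite scal_vzero; reflexivity.
  - replace (first_coord_op (add (scal c y) x))
      with (op_add add (op_scal scal c (first_coord_op y)) (first_coord_op x)).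
    + apply span_step; auto; apply in_map, Hy.
    + apply functional_extensionality; intro a; unfold first_coord_op, op_add, op_scal.
      rewrite scal_distr_l, !scal_assoc, Rmult_comm; reflexivity.
Qed.

Lemma span_cons y xs x : Span zero add scal xs x -> Span zero add scal (y :: xs) x.
Proof.
  intros Hx; induction Hx; [apply span_zero|apply span_step; simpl; auto].
Qed.

(* On [e_0] the operator takes the value [x + lam * T e_0]; on every other unit
   vector it takes the value [lam * T e_n], of norm at most [|lam|]. *)
Lemma op_norm_first_coord_add_le x lam T : inL T -> opn T <= 1 ->
  opn (op_add add (first_coord_op x) (op_scal scal lam T)) <=
  Rmax (norm (add x (scal lam (T (l1_unit 0))))) (Rabs lam).
Proof.
  intros HS HS1; apply op_norm_le_of_unit_bound.
  - apply in_L_l1_add; [apply first_coord_op_in_L_l1|apply in_L_l1_scal, HS].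
  - intros [|k]; unfold op_add, op_scal, first_coord_op; simpl; [rewrite scal_1; apply Rmax_l|].
    rewrite scal_0, vadd_0l, norm_scal; eapply Rle_trans; [|apply Rmax_r].
    pose proof (op_norm_ge_unit T (S k) HS); pose proof (norm_nonneg (T (l1_unit (S k)))).
    pose proof (Rabs_pos lam); nra.
Qed.

Lemma exists_unit_vector_of_octahedral_L :
  Octahedral inL (op_zero zero) (op_add add) (op_scal scal) opn -> exists x, norm x = 1.
Proof.
  intros HO; destruct (HO nil (Forall_nil _) 1 ltac:(lra)) as [S [HS [HS1 _]]].
  destruct (classic (exists n, norm (S (l1_unit n)) <> 0)) as [[n Hn]|Hall].
  - exists (scal (/ norm (S (l1_unit n))) (S (l1_unit n))).
    pose proof (norm_nonneg (S (l1_unit n))).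
    rewrite norm_scal, Rabs_right by (apply Rle_ge, Rlt_le, Rinv_0_lt_compat; lra).
    field; auto.
  - assert (opn S <= 0); [|lra].
    apply op_norm_le_of_unit_bound; auto; intro n.
    destruct (Req_dec (norm (S (l1_unit n))) 0) as [->|Hn]; [lra|].
    exfalso; apply Hall; eauto.
Qed.

Lemma octahedral_margin e N L A G r : 0 < e <= 1/12 -> 0 <= N -> 0 <= L ->
  (1 - e) * (N + L) <= Rmax A L -> L * r - N <= A -> 1 - 2 * e <= r <= 1 ->
  A <= G + L * (1 - r) -> (1 - 12 * e) * (N + L) <= G.
Proof.
  intros He HN0 HL0 Hmax Hlow Hr Hup.
  assert (Hdefect : L * (1 - r) <= 2 * e * L) by nra.
  unfold Rmax in Hmax; destruct (Rle_dec A L).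
  - assert (HNsmall : (1 - e) * N <= e * L) by nra.
    assert (2 * N <= 8 * e * L) by nra.
    nra.
  - nra.
Qed.

(* Normalising [y0] costs at most [|lam| (1 - |y0|)], which is small because
   testing the hypothesis on [x1] forces [|y0|] to be close to one. *)
Lemma octahedral_of_max_bound xs x1 y0 e : norm x1 = 1 -> norm y0 <= 1 -> 0 < e <= 1/12 ->
  (forall x lam, Span zero add scal (x1 :: xs) x ->
     (1 - e) * (norm x + Rabs lam) <= Rmax (norm (add x (scal lam y0))) (Rabs lam)) ->
  exists y, norm y = 1 /\ forall x lam, Span zero add scal xs x ->
    (1 - 12 * e) * (norm x + Rabs lam) <= norm (add x (scal lam y)).
Proof.
  intros Hx1 Hy0 He Hmax; set (r := norm y0) in *.
  assert (Hr : 1 - 2 * e <= r).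
  { pose proof (span_step zero add scal (x1 :: xs) 1 x1 zero (or_introl eq_refl)
      (span_zero _ _ _ _)) as Hspan.
    rewrite scal_1, vadd_0r in Hspan.
    pose proof (Hmax x1 1 Hspan) as H1; rewrite scal_1, Rabs_R1, Hx1 in H1.
    pose proof (norm_triangle x1 y0) as Htri; rewrite Hx1 in Htri; fold r in Htri.
    unfold Rmax in H1.
    destruct (Rle_dec (norm (add x1 y0)) 1); lra. }
  exists (scal (/ r) y0); split.
  { rewrite norm_scal, Rabs_right by (apply Rle_ge, Rlt_le, Rinv_0_lt_compat; lra).
    fold r; field; lra. }
  intros x lam Hx.
  apply (octahedral_margin e (norm x) (Rabs lam) (norm (add x (scal lam y0))) _ r);
    auto using norm_nonneg, Rabs_pos, span_cons.
  - pose proof (norm_triangle (add x (scal lam y0)) (scal (-1) x)) as Htri.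
    rewrite <- vadd_assoc, (vadd_comm (scal lam y0)), vadd_assoc, vadd_opp, vadd_0l in Htri.
    rewrite !norm_scal, Rabs_m1 in Htri; fold r in Htri; lra.
  - replace (add x (scal lam y0))
      with (add (add x (scal lam (scal (/ r) y0))) (scal (lam * (1 - / r)) y0)).
    + eapply Rle_trans; [apply norm_triangle|]; apply Rplus_le_compat_l.
      assert (Hir : 1 <= / r) by (apply (Rmult_le_reg_r r); [lra|rewrite Rinv_l; lra]).
      rewrite norm_scal, Rabs_mult, (Rabs_left1 (1 - / r)) by lra; fold r.
      right; field; lra.
    + rewrite scal_assoc, <- vadd_assoc, <- scal_distr_r; do 2 f_equal; field; lra.
Qed.

Lemma octahedral_of_octahedral_L_l1 :
  Octahedral inL (op_zero zero) (op_add add) (op_scal scal) opn ->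
  Octahedral (fun _ : Y => True) zero add scal norm.
Proof.
  intros HO xs _ eps Heps.
  destruct (exists_unit_vector_of_octahedral_L HO) as [x1 Hx1].
  set (e := Rmin eps 1 / 12).
  assert (He : 0 < e <= 1/12) by (unfold e, Rmin; destruct (Rle_dec eps 1); lra).
  assert (Hops : Forall inL (map first_coord_op (x1 :: xs))).
  { apply Forall_forall; intros T HT; apply in_map_iff in HT.
    destruct HT as [x [<- _]]; apply first_coord_op_in_L_l1. }
  destruct (HO _ Hops e ltac:(lra)) as [S [HS [HS1 HSoct]]].
  destruct (octahedral_of_max_bound xs x1 (S (l1_unit 0)) e Hx1) as [y [Hy Hyoct]]; auto.
  - rewrite <- HS1; apply op_norm_ge_unit, HS.
  - intros x lam Hx; eapply Rle_trans; [|apply op_norm_first_coord_add_le; [exact HS|lra]].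
    eapply Rle_trans; [|apply Rge_le, HSoct, span_first_coord_op, Hx].
    apply Rmult_le_compat_l; [lra|]; apply Rplus_le_compat_r.
    rewrite <- (first_coord_op_unit0 x) at 1; apply op_norm_ge_unit, first_coord_op_in_L_l1.
  - exists y; repeat split; auto; intros x lam Hx; apply Rle_ge.
    eapply Rle_trans; [|apply Hyoct, Hx]; apply Rmult_le_compat_r.
    + pose proof (norm_nonneg x); pose proof (Rabs_pos lam); lra.
    + unfold e; pose proof (Rmin_l eps 1); lra.
Qed.

End NormedSpace.

Theorem mainTheorem15 (Y : Type) (zero : Y) (add : Y -> Y -> Y)
    (scal : R -> Y -> Y) (norm : Y -> R)
    (HY : IsBanach zero add scal norm) :
  Octahedral (in_L_l1 add scal norm) (op_zero zero) (op_add add)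
    (op_scal scal) (op_norm norm)
  <-> Octahedral (fun _ : Y => True) zero add scal norm.
Proof.
  destruct HY as [HN complete]; split.
  - apply (octahedral_of_octahedral_L_l1 zero add scal norm HN).
  - apply (octahedral_L_l1_of_octahedral zero add scal norm HN complete).
Qed.
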